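(* Let $C$ be a constant and $h>0$. On the grid $x_j=x_0+jh$, $j\in\mathbb Z$, consider the linear semidiscrete wave system $$\dot v_j=w_j,\qquad \dot w_j=\frac{v_{j+1}-2v_j+v_{j-1}}{h^2}-Cv_j,\qquad j\in\mathbb Z.$$ Then for every $k=0,1,2,\dots$ the functional $$R_k=\sum_j w_j\,\big(D_0 (D_-D_+)^k v\big)_j\,h=-\sum_j v_j\,\big(D_0 (D_-D_+)^k w\big)_j\,h$$ is conserved along solutions. Moreover, if $\alpha(t,x)$ satisfies $$\alpha_{tt}(t,x)=\frac{\alpha(t,x+h)-2\alpha(t,x)+\alpha(t,x-h)}{h^2}-C\alpha(t,x),$$ then the functional $T=\sum_j\big(\alpha(t,x_j)w_j-\alpha_t(t,x_j)v_j\big)h$ is conserved along solutions.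
   Context: $S_\pm u_j=u_{j\pm1}$, $D_+=(S_+-1)/h$, $D_-=(1-S_-)/h$, $D_0=(S_+-S_-)/(2h)$. Solutions are assumed to decay sufficiently fast as $|j|\to\infty$ for all sums to make sense. *)

From Stdlib Require Import Reals ZArith Lra Lia.
From Coquelicot Require Import Coquelicot.
Open Scope R_scope.

Definition zsum (u : Z -> R) : R :=
  Series (fun n : nat => u (Z.of_nat n)) +
  Series (fun n : nat => u (- Z.of_nat (S n))%Z).

Definition zsummable (u : Z -> R) : Prop :=
  ex_series (fun n : nat => Rabs (u (Z.of_nat n))) /\
  ex_series (fun n : nat => Rabs (u (- Z.of_nat (S n))%Z)).

Definition Splus (u : Z -> R) : Z -> R := fun j => u (j + 1)%Z.
Definition Sminus (u : Z -> R) : Z -> R := fun j => u (j - 1)%Z.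
Definition Dplus (h : R) (u : Z -> R) : Z -> R := fun j => (Splus u j - u j) / h.
Definition Dminus (h : R) (u : Z -> R) : Z -> R := fun j => (u j - Sminus u j) / h.
Definition Dzero (h : R) (u : Z -> R) : Z -> R :=
  fun j => (Splus u j - Sminus u j) / (2 * h).

Definition DmDp_pow (h : R) (k : nat) (u : Z -> R) : Z -> R :=
  Nat.iter k (fun f => Dminus h (Dplus h f)) u.

Definition Lk (h : R) (k : nat) (u : Z -> R) : Z -> R := Dzero h (DmDp_pow h k u).

Definition is_semidiscrete_wave_solution (h C : R) (v w : R -> Z -> R) : Prop :=
  forall (t : R) (j : Z),
    is_derive (fun s => v s j) t (w t j) /\
    is_derive (fun s => w s j) t
      ((v t (j + 1)%Z - 2 * v t j + v t (j - 1)%Z) / h ^ 2 - C * v t j).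

(* Standing decay assumption: on every compact time interval the solution is
   dominated by a fixed absolutely summable grid function. *)
Definition locally_dominated (v w : R -> Z -> R) : Prop :=
  forall a b : R, exists M : Z -> R, zsummable M /\
    forall t : R, a <= t <= b -> forall j : Z, Rabs (v t j) + Rabs (w t j) <= M j.

Definition Rk (h : R) (k : nat) (v w : R -> Z -> R) (t : R) : R :=
  zsum (fun j => w t j * Lk h k (v t) j * h).

Definition Tfun (h x0 : R) (alpha alpha_t : R -> R -> R) (v w : R -> Z -> R) (t : R) : R :=
  zsum (fun j => (alpha t (x0 + IZR j * h) * w t j
                  - alpha_t t (x0 + IZR j * h) * v t j) * h).

From Pilot Require Import Defs.
From Stdlib Require Import Reals ZArith Lra Lia FunctionalExtensionality.
From Coquelicot Require Import Coquelicot.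
(* Stdlib's [Rlimit.Dminus] would otherwise shadow the grid operator [Dminus]. *)
Import Defs.
Open Scope R_scope.

(* Both functionals are pairings [sum_j a_j b_j h] of grid functions.  Summation by parts
   makes [D_+] and [-D_-] adjoint, so [D_0] is skew-adjoint and [D_-D_+] self-adjoint; as
   they commute, [L_k = D_0 (D_-D_+)^k] is skew-adjoint, which is the identity between the
   two expressions of [R_k].  Differentiating [R_k] in time gives
   [<D_-D_+ v - C v, L_k v> + <w, L_k w>]: the last two pairings vanish by skew-adjointness
   and the first equals [<v, L_(k+1) v> = 0].  For [T], the second differences of [alpha]
   and [v] cancel up to products of neighbouring values, which telescope. *)

(** * Absolutely summable grid functions *)

Lemma zsummable_le_abs (u M : Z -> R) :
  zsummable M -> (forall j, Rabs (u j) <= Rabs (M j)) -> zsummable u.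
Proof.
  intros [Hp Hn] HuM;
    split; [refine (@ex_series_le R_AbsRing R_CompleteNormedModule _ _ _ Hp)
           | refine (@ex_series_le R_AbsRing R_CompleteNormedModule _ _ _ Hn)];
    intros n; unfold norm; simpl; rewrite Rabs_Rabsolu; apply HuM.
Qed.

Lemma zsummable_le (u M : Z -> R) :
  zsummable M -> (forall j, Rabs (u j) <= M j) -> zsummable u.
Proof.
  intros HM HuM. apply (zsummable_le_abs u M HM).
  intros j. eapply Rle_trans; [apply HuM | apply Rle_abs].
Qed.

Lemma zsummable_ext (u v : Z -> R) :
  (forall j, u j = v j) -> zsummable u -> zsummable v.
Proof. intros Huv Hu. apply (zsummable_le_abs v u Hu). intros j. rewrite Huv. lra. Qed.

Lemma zsummable_abs (u : Z -> R) : zsummable u -> zsummable (fun j => Rabs (u j)).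
Proof. intros Hu. apply (zsummable_le_abs _ u Hu). intros j. rewrite Rabs_Rabsolu. lra. Qed.

Lemma zsummable_plus (u v : Z -> R) :
  zsummable u -> zsummable v -> zsummable (fun j => u j + v j).
Proof.
  intros [Hu1 Hu2] [Hv1 Hv2].
  apply (zsummable_le _ (fun j => Rabs (u j) + Rabs (v j))); [| intros j; apply Rabs_triang].
  split; eapply ex_series_ext;
    [| apply (ex_series_plus _ _ Hu1 Hv1) | | apply (ex_series_plus _ _ Hu2 Hv2)];
    intros n; symmetry; apply Rabs_pos_eq, Rplus_le_le_0_compat; apply Rabs_pos.
Qed.

Lemma zsummable_scal (c : R) (u : Z -> R) : zsummable u -> zsummable (fun j => c * u j).
Proof.
  intros [Hu1 Hu2].
  split; eapply ex_series_ext;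
    [| apply (ex_series_scal_l (Rabs c) _ Hu1) | | apply (ex_series_scal_l (Rabs c) _ Hu2)];
    intros n; symmetry; apply Rabs_mult.
Qed.

Lemma zsummable_minus (u v : Z -> R) :
  zsummable u -> zsummable v -> zsummable (fun j => u j - v j).
Proof.
  intros Hu Hv. apply (zsummable_ext (fun j => u j + -1 * v j)); [intros; ring |].
  apply zsummable_plus, zsummable_scal; assumption.
Qed.

Lemma zsummable_scal_r (c : R) (u : Z -> R) : zsummable u -> zsummable (fun j => u j * c).
Proof.
  intros Hu. apply (zsummable_ext (fun j => c * u j)); [intros; ring |].
  apply zsummable_scal, Hu.
Qed.

Lemma zsummable_succ (u : Z -> R) : zsummable u -> zsummable (fun j => u (j + 1)%Z).
Proof.
  intros [Hp Hn]. split.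
  - apply ex_series_incr_1 in Hp.
    eapply ex_series_ext; [| exact Hp]. intros n. cbv beta. do 2 f_equal. lia.
  - apply ex_series_incr_1.
    eapply ex_series_ext; [| exact Hn]. intros n. cbv beta. do 2 f_equal. lia.
Qed.

Lemma zsummable_pred (u : Z -> R) : zsummable u -> zsummable (fun j => u (j - 1)%Z).
Proof.
  intros [Hp Hn]. split.
  - apply ex_series_incr_1.
    eapply ex_series_ext; [| exact Hp]. intros n. cbv beta. do 2 f_equal. lia.
  - apply ex_series_incr_1 in Hn.
    eapply ex_series_ext; [| exact Hn]. intros n. cbv beta. do 2 f_equal. lia.
Qed.

Lemma Series_term_le (a : nat -> R) (n : nat) :
  (forall k, 0 <= a k) -> ex_series a -> a n <= Series a.
Proof.
  intros Ha Hex.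
  assert (Hsum : a n <= sum_f_R0 a n).
  { destruct n as [| n]; simpl; [lra |].
    pose proof (cond_pos_sum a n Ha). lra. }
  eapply Rle_trans; [exact Hsum |].
  apply sum_incr; [apply is_series_Reals, Series_correct, Hex | exact Ha].
Qed.

Lemma zsummable_bounded (u : Z -> R) : zsummable u -> exists B, forall j, Rabs (u j) <= B.
Proof.
  intros [Hp Hn].
  exists (Series (fun n => Rabs (u (Z.of_nat n)))
          + Series (fun n => Rabs (u (- Z.of_nat (S n))%Z))).
  pose proof (fun n => Series_term_le _ n (fun k => Rabs_pos _) Hp) as Bp.
  pose proof (fun n => Series_term_le _ n (fun k => Rabs_pos _) Hn) as Bn.
  pose proof (Rabs_pos (u 0%Z)) as H0. pose proof (Rabs_pos (u (-1)%Z)) as H1.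
  specialize (Bp 0%nat) as Bp0. specialize (Bn 0%nat) as Bn0.
  intros j. destruct (Z_le_gt_dec 0 j).
  - replace j with (Z.of_nat (Z.to_nat j)) by lia. specialize (Bp (Z.to_nat j)). simpl in *. lra.
  - replace j with (- Z.of_nat (S (Z.to_nat (- j - 1))))%Z by lia.
    specialize (Bn (Z.to_nat (- j - 1))). simpl in *. lra.
Qed.

Lemma zsummable_mul_bounded (u v : Z -> R) (B : R) :
  zsummable u -> (forall j, Rabs (v j) <= B) -> zsummable (fun j => u j * v j).
Proof.
  intros Hu Hv. apply (zsummable_le _ (fun j => Rabs (u j) * B)).
  - apply zsummable_scal_r, zsummable_abs, Hu.
  - intros j. rewrite Rabs_mult. apply Rmult_le_compat_l; [apply Rabs_pos | apply Hv].
Qed.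

Lemma zsummable_mul (u v : Z -> R) :
  zsummable u -> zsummable v -> zsummable (fun j => u j * v j).
Proof.
  intros Hu Hv. destruct (zsummable_bounded v Hv) as [B HB].
  exact (zsummable_mul_bounded u v B Hu HB).
Qed.

Lemma zsum_ext (u v : Z -> R) : (forall j, u j = v j) -> zsum u = zsum v.
Proof. intros H. unfold zsum. f_equal; apply Series_ext; intros; apply H. Qed.

Lemma zsum_plus (u v : Z -> R) :
  zsummable u -> zsummable v -> zsum (fun j => u j + v j) = zsum u + zsum v.
Proof.
  intros [Hu1 Hu2] [Hv1 Hv2]. unfold zsum.
  rewrite !Series_plus by (apply ex_series_Rabs; assumption). ring.
Qed.

Lemma zsum_scal (c : R) (u : Z -> R) : zsum (fun j => c * u j) = c * zsum u.
Proof. unfold zsum. rewrite !Series_scal_l. ring. Qed.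

Lemma zsum_scal_r (c : R) (u : Z -> R) : zsum (fun j => u j * c) = zsum u * c.
Proof. rewrite (zsum_ext _ (fun j => c * u j)) by (intros; ring). rewrite zsum_scal. ring. Qed.

Lemma zsum_minus (u v : Z -> R) :
  zsummable u -> zsummable v -> zsum (fun j => u j - v j) = zsum u - zsum v.
Proof.
  intros Hu Hv. rewrite (zsum_ext _ (fun j => u j + -1 * v j)) by (intros; ring).
  rewrite zsum_plus, zsum_scal by auto using zsummable_scal. ring.
Qed.

Lemma zsum_succ (u : Z -> R) : zsummable u -> zsum (fun j => u (j + 1)%Z) = zsum u.
Proof.
  intros Hu. pose proof (zsummable_succ u Hu) as [_ Hs]. destruct Hu as [Hp _].
  unfold zsum.
  rewrite (Series_incr_1 (fun n => u (Z.of_nat n))) by (apply ex_series_Rabs, Hp).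
  rewrite (Series_incr_1 (fun n => u (- Z.of_nat (S n) + 1)%Z)) by (apply ex_series_Rabs, Hs).
  rewrite (Series_ext (fun n => u (Z.of_nat (S n))) (fun n => u (Z.of_nat n + 1)%Z))
    by (intros; f_equal; lia).
  rewrite (Series_ext (fun n => u (- Z.of_nat (S (S n)) + 1)%Z) (fun n => u (- Z.of_nat (S n))%Z))
    by (intros; f_equal; lia).
  replace (- Z.of_nat 1 + 1)%Z with (Z.of_nat 0) by lia. ring.
Qed.

Lemma zsum_pred (u : Z -> R) : zsummable u -> zsum (fun j => u (j - 1)%Z) = zsum u.
Proof.
  intros Hu. rewrite <- (zsum_succ _ (zsummable_pred u Hu)).
  apply zsum_ext. intros j. f_equal. lia.
Qed.

Definition dominated_on (a b : R) (F : R -> Z -> R) : Prop :=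
  exists D, zsummable D /\ forall t, a <= t <= b -> forall j, Rabs (F t j) <= D j.

Section Domination.

Variables a b : R.

Lemma dominated_on_zsummable (F : R -> Z -> R) (t : R) :
  a <= t <= b -> dominated_on a b F -> zsummable (F t).
Proof. intros Ht [D [HD HFD]]. exact (zsummable_le _ D HD (HFD t Ht)). Qed.

Lemma dominated_on_bounded (F : R -> Z -> R) :
  dominated_on a b F -> exists B, forall t, a <= t <= b -> forall j, Rabs (F t j) <= B.
Proof.
  intros [D [HD HFD]]. destruct (zsummable_bounded D HD) as [B HB].
  exists B. intros t Ht j.
  eapply Rle_trans; [apply HFD, Ht | eapply Rle_trans; [apply Rle_abs | apply HB]].
Qed.

Lemma dominated_on_plus (F G : R -> Z -> R) :
  dominated_on a b F -> dominated_on a b G -> dominated_on a b (fun t j => F t j + G t j).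
Proof.
  intros [D [HD HFD]] [E [HE HGE]]. exists (fun j => D j + E j).
  split; [apply zsummable_plus; assumption |].
  intros t Ht j. eapply Rle_trans; [apply Rabs_triang | apply Rplus_le_compat; auto].
Qed.

Lemma dominated_on_minus (F G : R -> Z -> R) :
  dominated_on a b F -> dominated_on a b G -> dominated_on a b (fun t j => F t j - G t j).
Proof.
  intros [D [HD HFD]] [E [HE HGE]]. exists (fun j => D j + E j).
  split; [apply zsummable_plus; assumption |].
  intros t Ht j. unfold Rminus. eapply Rle_trans; [apply Rabs_triang |].
  rewrite Rabs_Ropp. apply Rplus_le_compat; auto.
Qed.

Lemma dominated_on_scal_r (c : R) (F : R -> Z -> R) :
  dominated_on a b F -> dominated_on a b (fun t j => F t j * c).
Proof.
  intros [D [HD HFD]]. exists (fun j => D j * Rabs c).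
  split; [apply zsummable_scal_r; assumption |].
  intros t Ht j. rewrite Rabs_mult. apply Rmult_le_compat_r; [apply Rabs_pos | auto].
Qed.

Lemma dominated_on_succ (F : R -> Z -> R) :
  dominated_on a b F -> dominated_on a b (fun t j => F t (j + 1)%Z).
Proof.
  intros [D [HD HFD]]. exists (fun j => D (j + 1)%Z). split; [apply zsummable_succ |]; auto.
Qed.

Lemma dominated_on_pred (F : R -> Z -> R) :
  dominated_on a b F -> dominated_on a b (fun t j => F t (j - 1)%Z).
Proof.
  intros [D [HD HFD]]. exists (fun j => D (j - 1)%Z). split; [apply zsummable_pred |]; auto.
Qed.

Lemma dominated_on_mul_bounded (F G : R -> Z -> R) (B : R) :
  dominated_on a b F -> (forall t, a <= t <= b -> forall j, Rabs (G t j) <= B) ->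
  dominated_on a b (fun t j => F t j * G t j).
Proof.
  intros [D [HD HFD]] HG. exists (fun j => Rabs (D j) * B). split.
  - apply zsummable_scal_r, zsummable_abs, HD.
  - intros t Ht j. rewrite Rabs_mult.
    apply Rmult_le_compat; try apply Rabs_pos; [| auto].
    eapply Rle_trans; [apply HFD, Ht | apply Rle_abs].
Qed.

End Domination.

(** * Termwise differentiation of sums over the grid *)

Definition zpartial (u : Z -> R) (N : nat) : R :=
  sum_f_R0 (fun n => u (Z.of_nat n)) N + sum_f_R0 (fun n => u (- Z.of_nat (S n))%Z) N.

Lemma is_lim_seq_zpartial (u : Z -> R) : zsummable u -> is_lim_seq (zpartial u) (zsum u).
Proof.
  intros [Hp Hn]. unfold zpartial, zsum.
  apply is_lim_seq_plus'; apply is_lim_seq_Reals, is_series_Reals, Series_correct, ex_series_Rabs;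
    assumption.
Qed.

Lemma Series_tail_le (a b : nat -> R) (N : nat) :
  (forall n, Rabs (a n) <= b n) -> ex_series b ->
  Rabs (Series a - sum_f_R0 a N) <= Series b - sum_f_R0 b N.
Proof.
  intros Hab Hb.
  assert (Ha : ex_series a) by exact (@ex_series_le R_AbsRing R_CompleteNormedModule a b Hab Hb).
  rewrite (Series_incr_n a (S N)), (Series_incr_n b (S N)) by (lia || assumption). simpl pred.
  replace (sum_f_R0 a N + _ - _) with (Series (fun k => a (S N + k)%nat)) by ring.
  replace (sum_f_R0 b N + _ - _) with (Series (fun k => b (S N + k)%nat)) by ring.
  assert (Hbt : ex_series (fun k => b (S N + k)%nat)) by (apply ex_series_incr_n; assumption).
  eapply Rle_trans; [apply Series_Rabs |].
  - refine (@ex_series_le R_AbsRing R_CompleteNormedModule _ _ _ Hbt).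
    intros n. unfold norm; simpl. rewrite Rabs_Rabsolu. apply Hab.
  - apply Series_le; [| exact Hbt]. intros n. split; [apply Rabs_pos | apply Hab].
Qed.

Lemma zsum_tail_le (u D : Z -> R) (N : nat) :
  zsummable D -> (forall j, Rabs (u j) <= D j) ->
  Rabs (zsum u - zpartial u N) <= zsum D - zpartial D N.
Proof.
  intros [Hp Hn] HuD.
  assert (HD : forall j, Rabs (D j) = D j)
    by (intros j; apply Rabs_pos_eq; eapply Rle_trans; [apply Rabs_pos | apply HuD]).
  assert (Hp' : ex_series (fun n => D (Z.of_nat n)))
    by (eapply ex_series_ext; [intros n; apply HD | exact Hp]).
  assert (Hn' : ex_series (fun n => D (- Z.of_nat (S n))%Z))
    by (eapply ex_series_ext; [intros n; apply HD | exact Hn]).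
  pose proof (Series_tail_le (fun n => u (Z.of_nat n)) _ N (fun n => HuD _) Hp').
  pose proof (Series_tail_le (fun n => u (- Z.of_nat (S n))%Z) _ N (fun n => HuD _) Hn').
  assert (Hsplit : forall x y z w : R, x + y - (z + w) = (x - z) + (y - w)) by (intros; ring).
  unfold zsum, zpartial. rewrite !Hsplit.
  eapply Rle_trans; [apply Rabs_triang | apply Rplus_le_compat; assumption].
Qed.

Lemma is_derive_zpartial (f : R -> Z -> R) (g : Z -> R) (t : R) (N : nat) :
  (forall j, is_derive (fun s => f s j) t (g j)) ->
  is_derive (fun s => zpartial (f s) N) t (zpartial g N).
Proof.
  intros Hfg. unfold zpartial.
  apply (is_derive_plus (fun s => sum_f_R0 (fun n => f s (Z.of_nat n)) N)
                        (fun s => sum_f_R0 (fun n => f s (- Z.of_nat (S n))%Z) N));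
    induction N as [| N IH]; simpl; auto;
    apply (is_derive_plus (fun s => sum_f_R0 _ N)); auto.
Qed.

Lemma zpartial_increment_le (f g : R -> Z -> R) (D : Z -> R) (t1 t2 : R) (N : nat) :
  (forall t j, is_derive (fun s => f s j) t (g t j)) ->
  zsummable D ->
  (forall t, Rmin t1 t2 <= t <= Rmax t1 t2 -> forall j, Rabs (g t j) <= D j) ->
  (forall t, zsum (g t) = 0) ->
  Rabs (zpartial (f t2) N - zpartial (f t1) N) <= (zsum D - zpartial D N) * Rabs (t2 - t1).
Proof.
  intros Hfg HD HgD Hg0.
  destruct (MVT_gen (fun s => zpartial (f s) N) t1 t2 (fun s => zpartial (g s) N)) as [c [Hc ->]].
  - intros t _. apply is_derive_zpartial. intros j; apply Hfg.
  - intros t _. apply continuity_pt_filterlim, (ex_derive_continuous (fun s => zpartial (f s) N)).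
    eexists. apply is_derive_zpartial. intros j; apply Hfg.
  - rewrite Rabs_mult. apply Rmult_le_compat_r; [apply Rabs_pos |].
    rewrite <- Rabs_Ropp, <- (Rminus_0_l (zpartial (g c) N)), <- (Hg0 c).
    apply zsum_tail_le; [exact HD |]. apply HgD, Hc.
Qed.

(* The partial sums of [f t] have derivative [zpartial (g t) N], which by [zsum (g t) = 0]
   is minus a tail of [g t]; the domination makes these tails uniformly small in [t]. *)
Lemma zsum_conserved (f g : R -> Z -> R) :
  (forall t j, is_derive (fun s => f s j) t (g t j)) ->
  (forall t, zsummable (f t)) ->
  (forall a b, dominated_on a b g) ->
  (forall t, zsum (g t) = 0) ->
  forall t1 t2, zsum (f t1) = zsum (f t2).
Proof.
  intros Hfg Hf Hg Hg0 t1 t2.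
  destruct (Hg (Rmin t1 t2) (Rmax t1 t2)) as [D [HD HgD]].
  set (bound := fun N => (zsum D - zpartial D N) * Rabs (t2 - t1)).
  assert (Hbound : is_lim_seq bound 0).
  { replace (Finite 0) with (Rbar_mult (zsum D - zsum D) (Rabs (t2 - t1)))
      by (simpl; f_equal; ring).
    apply is_lim_seq_scal_r, is_lim_seq_minus';
      [apply is_lim_seq_const | apply is_lim_seq_zpartial, HD]. }
  assert (Hlim0 : is_lim_seq (fun N => zpartial (f t2) N - zpartial (f t1) N) 0).
  { apply (is_lim_seq_le_le (fun N => - bound N) _ bound); [| | exact Hbound].
    - intros N. apply Rabs_le_between, (zpartial_increment_le f g D); assumption.
    - replace (Finite 0) with (Rbar_opp 0) by (simpl; f_equal; ring).
      apply (is_lim_seq_opp bound 0), Hbound. }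
  assert (Hlim : is_lim_seq (fun N => zpartial (f t2) N - zpartial (f t1) N)
                            (zsum (f t2) - zsum (f t1)))
    by (apply is_lim_seq_minus'; apply is_lim_seq_zpartial, Hf).
  pose proof (is_lim_seq_unique _ _ Hlim0) as E0. rewrite (is_lim_seq_unique _ _ Hlim) in E0.
  injection E0. lra.
Qed.

(** * Summation by parts *)

Lemma zsummable_Dplus (h : R) (u : Z -> R) : zsummable u -> zsummable (Dplus h u).
Proof.
  intros Hu. unfold Dplus, Rdiv.
  apply zsummable_scal_r, zsummable_minus; [apply zsummable_succ |]; exact Hu.
Qed.

Lemma zsummable_Dminus (h : R) (u : Z -> R) : zsummable u -> zsummable (Dminus h u).
Proof.
  intros Hu. unfold Dminus, Rdiv.
  apply zsummable_scal_r, zsummable_minus; [| apply zsummable_pred]; exact Hu.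
Qed.

Lemma zsummable_Dzero (h : R) (u : Z -> R) : zsummable u -> zsummable (Dzero h u).
Proof.
  intros Hu. unfold Dzero, Rdiv.
  apply zsummable_scal_r, zsummable_minus; [apply zsummable_succ | apply zsummable_pred]; exact Hu.
Qed.

Lemma zsummable_DmDp_pow (h : R) (k : nat) (u : Z -> R) :
  zsummable u -> zsummable (DmDp_pow h k u).
Proof.
  intros Hu. induction k as [| k IH]; simpl; [exact Hu |].
  apply zsummable_Dminus, zsummable_Dplus, IH.
Qed.

Lemma zsummable_Lk (h : R) (k : nat) (u : Z -> R) : zsummable u -> zsummable (Lk h k u).
Proof. intros Hu. apply zsummable_Dzero, zsummable_DmDp_pow, Hu. Qed.

Definition zdot (a b : Z -> R) : R := zsum (fun j => a j * b j).

Lemma zdot_comm (a b : Z -> R) : zdot a b = zdot b a.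
Proof. apply zsum_ext. intros j. ring. Qed.

Lemma zdot_Splus (a b : Z -> R) :
  zsummable a -> zsummable b -> zdot a (Splus b) = zdot (Sminus a) b.
Proof.
  intros Ha Hb. unfold zdot, Splus, Sminus.
  rewrite <- (zsum_pred (fun j => a j * b (j + 1)%Z)) by auto using zsummable_mul, zsummable_succ.
  apply zsum_ext. intros j. do 2 f_equal. lia.
Qed.

Lemma zdot_Dplus (h : R) (a b : Z -> R) :
  zsummable a -> zsummable b -> zdot a (Dplus h b) = - zdot (Dminus h a) b.
Proof.
  intros Ha Hb. pose proof (zdot_Splus a b Ha Hb) as Hshift. unfold zdot in *.
  rewrite (zsum_ext _ (fun j => (a j * Splus b j - a j * b j) * / h))
    by (intros; unfold Dplus, Rdiv; ring).
  rewrite (zsum_ext (fun j => Dminus h a j * b j) (fun j => (a j * b j - Sminus a j * b j) * / h))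
    by (intros; unfold Dminus, Rdiv; ring).
  rewrite !zsum_scal_r, !zsum_minus, Hshift
    by (unfold Splus, Sminus; auto using zsummable_mul, zsummable_succ, zsummable_pred).
  ring.
Qed.

Lemma zdot_Dminus (h : R) (a b : Z -> R) :
  zsummable a -> zsummable b -> zdot a (Dminus h b) = - zdot (Dplus h a) b.
Proof.
  intros Ha Hb. rewrite zdot_comm, (zdot_comm (Dplus h a)), (zdot_Dplus h b a Hb Ha). ring.
Qed.

Lemma zdot_Dzero (h : R) (a b : Z -> R) :
  zsummable a -> zsummable b -> zdot a (Dzero h b) = - zdot (Dzero h a) b.
Proof.
  intros Ha Hb.
  assert (Havg : forall u j, Dzero h u j = (Dplus h u j + Dminus h u j) * / 2).
  { intros u j. unfold Dzero, Dplus, Dminus, Splus, Sminus, Rdiv. rewrite Rinv_mult. ring. }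
  pose proof (zdot_Dplus h a b Ha Hb). pose proof (zdot_Dminus h a b Ha Hb). unfold zdot in *.
  rewrite (zsum_ext _ (fun j => (a j * Dplus h b j + a j * Dminus h b j) * / 2))
    by (intros; rewrite Havg; ring).
  rewrite (zsum_ext (fun j => Dzero h a j * b j)
                    (fun j => (Dplus h a j * b j + Dminus h a j * b j) * / 2))
    by (intros; rewrite Havg; ring).
  rewrite !zsum_scal_r, !zsum_plus
    by auto using zsummable_mul, zsummable_Dplus, zsummable_Dminus.
  lra.
Qed.

Lemma DmDp_pow_succ (h : R) (k : nat) (u : Z -> R) :
  DmDp_pow h (S k) u = DmDp_pow h k (Dminus h (Dplus h u)).
Proof. unfold DmDp_pow. rewrite Nat.iter_succ_r. reflexivity. Qed.

Lemma zdot_DmDp_pow (h : R) (k : nat) (a b : Z -> R) :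
  zsummable a -> zsummable b -> zdot a (DmDp_pow h k b) = zdot (DmDp_pow h k a) b.
Proof.
  revert a. induction k as [| k IH]; intros a Ha Hb; [reflexivity |].
  change (zdot a (Dminus h (Dplus h (DmDp_pow h k b))) = zdot (DmDp_pow h (S k) a) b).
  rewrite zdot_Dminus, zdot_Dplus, IH, DmDp_pow_succ
    by auto using zsummable_Dplus, zsummable_Dminus, zsummable_DmDp_pow.
  ring.
Qed.

Lemma Dzero_DmDp (h : R) (u : Z -> R) :
  Dzero h (Dminus h (Dplus h u)) = Dminus h (Dplus h (Dzero h u)).
Proof.
  apply functional_extensionality. intros j.
  unfold Dzero, Dminus, Dplus, Splus, Sminus.
  replace (j - 1 + 1)%Z with j by lia. replace (j + 1 - 1)%Z with j by lia.
  replace (j - 1 + 1 + 1)%Z with (j + 1)%Z by lia. replace (j - 1 - 1 + 1)%Z with (j - 1)%Z by lia.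
  unfold Rdiv. rewrite !Rinv_mult. ring.
Qed.

Lemma Dzero_DmDp_pow (h : R) (k : nat) (u : Z -> R) :
  Dzero h (DmDp_pow h k u) = DmDp_pow h k (Dzero h u).
Proof.
  induction k as [| k IH]; [reflexivity |].
  change (Dzero h (Dminus h (Dplus h (DmDp_pow h k u)))
          = Dminus h (Dplus h (DmDp_pow h k (Dzero h u)))).
  rewrite Dzero_DmDp, IH. reflexivity.
Qed.

Lemma zdot_Lk (h : R) (k : nat) (a b : Z -> R) :
  zsummable a -> zsummable b -> zdot a (Lk h k b) = - zdot (Lk h k a) b.
Proof.
  intros Ha Hb. unfold Lk.
  rewrite zdot_Dzero, zdot_DmDp_pow, Dzero_DmDp_pow
    by auto using zsummable_Dzero, zsummable_DmDp_pow.
  reflexivity.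
Qed.

Lemma zdot_Lk_self (h : R) (k : nat) (a : Z -> R) : zsummable a -> zdot a (Lk h k a) = 0.
Proof. intros Ha. pose proof (zdot_Lk h k a a Ha Ha). rewrite (zdot_comm (Lk h k a)) in H. lra. Qed.

Lemma zdot_DmDp_Lk_self (h : R) (k : nat) (a : Z -> R) :
  zsummable a -> zdot (Dminus h (Dplus h a)) (Lk h k a) = 0.
Proof.
  intros Ha. rewrite zdot_Lk by auto using zsummable_Dminus, zsummable_Dplus.
  replace (Lk h k (Dminus h (Dplus h a))) with (Lk h (S k) a)
    by (unfold Lk; now rewrite DmDp_pow_succ).
  rewrite zdot_comm, zdot_Lk_self by exact Ha. ring.
Qed.

Lemma Rabs_diff_div_le (x y d B : R) :
  Rabs x <= B -> Rabs y <= B -> Rabs ((x - y) / d) <= 2 * Rabs (/ d) * B.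
Proof.
  intros Hx Hy. unfold Rdiv. rewrite Rabs_mult.
  assert (Rabs (x - y) <= 2 * B)
    by (unfold Rminus; eapply Rle_trans; [apply Rabs_triang | rewrite Rabs_Ropp; lra]).
  pose proof (Rabs_pos (/ d)). nra.
Qed.

Lemma Dplus_bound (h B : R) (u : Z -> R) :
  (forall j, Rabs (u j) <= B) -> forall j, Rabs (Dplus h u j) <= 2 * Rabs (/ h) * B.
Proof. intros Hu j. apply Rabs_diff_div_le; apply Hu. Qed.

Lemma Dminus_bound (h B : R) (u : Z -> R) :
  (forall j, Rabs (u j) <= B) -> forall j, Rabs (Dminus h u j) <= 2 * Rabs (/ h) * B.
Proof. intros Hu j. apply Rabs_diff_div_le; apply Hu. Qed.

Lemma DmDp_pow_bound (h B : R) (k : nat) (u : Z -> R) :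
  (forall j, Rabs (u j) <= B) ->
  forall j, Rabs (DmDp_pow h k u j) <= (2 * Rabs (/ h)) ^ (2 * k) * B.
Proof.
  intros Hu. induction k as [| k IH]; intros j; [simpl; rewrite Rmult_1_l; apply Hu |].
  replace ((2 * Rabs (/ h)) ^ (2 * S k) * B)
    with (2 * Rabs (/ h) * (2 * Rabs (/ h) * ((2 * Rabs (/ h)) ^ (2 * k) * B)))
    by (replace (2 * S k)%nat with (S (S (2 * k))) by lia; simpl; ring).
  apply Dminus_bound, Dplus_bound, IH.
Qed.

Lemma Lk_bound (h B : R) (k : nat) (u : Z -> R) :
  (forall j, Rabs (u j) <= B) ->
  forall j, Rabs (Lk h k u j) <= 2 * Rabs (/ (2 * h)) * ((2 * Rabs (/ h)) ^ (2 * k) * B).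
Proof. intros Hu j. apply Rabs_diff_div_le; apply DmDp_pow_bound, Hu. Qed.

Lemma is_derive_eq (f : R -> R) (t d d' : R) : is_derive f t d -> d = d' -> is_derive f t d'.
Proof. intros Hd <-. exact Hd. Qed.

Lemma is_derive_Rmult (A B : R -> R) (t a b : R) :
  is_derive A t a -> is_derive B t b -> is_derive (fun s => A s * B s) t (a * B t + A t * b).
Proof. intros HA HB. apply (is_derive_mult A B); [exact HA | exact HB | exact Rmult_comm]. Qed.

Lemma is_derive_Rmult_const_r (A : R -> R) (t a c : R) :
  is_derive A t a -> is_derive (fun s => A s * c) t (a * c).
Proof. exact (@is_derive_scal_l R_AbsRing R_NormedModule A t a c). Qed.

Lemma is_derive_diff_div (A B : R -> R) (t a b d : R) :
  is_derive A t a -> is_derive B t b -> is_derive (fun s => (A s - B s) / d) t ((a - b) / d).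
Proof. intros HA HB. apply is_derive_Rmult_const_r, (is_derive_minus A B); assumption. Qed.

Section TimeDerivatives.

Variables (h t : R) (U : R -> Z -> R) (U' : Z -> R).
Hypothesis HU : forall j, is_derive (fun s => U s j) t (U' j).

Lemma is_derive_DmDp_pow (k : nat) :
  forall j, is_derive (fun s => DmDp_pow h k (U s) j) t (DmDp_pow h k U' j).
Proof.
  induction k as [| k IH]; intros j; simpl; [apply HU |].
  apply is_derive_diff_div; apply is_derive_diff_div; apply IH.
Qed.

Lemma is_derive_Lk (k : nat) :
  forall j, is_derive (fun s => Lk h k (U s) j) t (Lk h k U' j).
Proof. intros j. apply is_derive_diff_div; apply is_derive_DmDp_pow. Qed.

End TimeDerivatives.

Lemma dominated_on_Dplus (a b h : R) (F : R -> Z -> R) :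
  dominated_on a b F -> dominated_on a b (fun t => Dplus h (F t)).
Proof.
  intros HF. apply dominated_on_scal_r, dominated_on_minus; [apply dominated_on_succ |]; exact HF.
Qed.

Lemma dominated_on_Dminus (a b h : R) (F : R -> Z -> R) :
  dominated_on a b F -> dominated_on a b (fun t => Dminus h (F t)).
Proof.
  intros HF. apply dominated_on_scal_r, dominated_on_minus; [| apply dominated_on_pred]; exact HF.
Qed.

Lemma dominated_on_mul_Lk (a b h : R) (k : nat) (F G : R -> Z -> R) :
  dominated_on a b F -> dominated_on a b G -> dominated_on a b (fun t j => F t j * Lk h k (G t) j).
Proof.
  intros HF HG. destruct (dominated_on_bounded a b G HG) as [B HB].
  eapply (dominated_on_mul_bounded a b _ _ _ HF). intros t Ht. apply Lk_bound, HB, Ht.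
Qed.

(** * The conserved functionals *)

Lemma second_difference_DmDp (h : R) (u : Z -> R) (j : Z) :
  h <> 0 -> (u (j + 1)%Z - 2 * u j + u (j - 1)%Z) / h ^ 2 = Dminus h (Dplus h u) j.
Proof.
  intros Hh. unfold Dminus, Dplus, Splus, Sminus.
  replace (j - 1 + 1)%Z with j by lia. field. exact Hh.
Qed.

Section WaveSystem.

Variables (h C : R) (v w : R -> Z -> R).
Hypothesis hpos : 0 < h.
Hypothesis Hsol : is_semidiscrete_wave_solution h C v w.

Section DecayingSolution.

Hypothesis Hdec : locally_dominated v w.

Lemma wave_dominated_on (a b : R) : dominated_on a b v /\ dominated_on a b w.
Proof.
  destruct (Hdec a b) as [M [HM HvwM]].
  split; exists M; split; try exact HM; intros t Ht j; specialize (HvwM t Ht j);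
    pose proof (Rabs_pos (v t j)); pose proof (Rabs_pos (w t j)); lra.
Qed.

Lemma wave_zsummable (t : R) : zsummable (v t) /\ zsummable (w t).
Proof.
  destruct (wave_dominated_on t t) as [Hv Hw].
  split; eapply dominated_on_zsummable; eauto; lra.
Qed.

Lemma Rk_skew (k : nat) (t : R) :
  Rk h k v w t = - zsum (fun j => v t j * Lk h k (w t) j * h).
Proof.
  destruct (wave_zsummable t) as [Hv Hw]. unfold Rk.
  rewrite !zsum_scal_r. fold (zdot (w t) (Lk h k (v t))) (zdot (v t) (Lk h k (w t))).
  rewrite zdot_Lk, zdot_comm by assumption. ring.
Qed.

Lemma Rk_conserved (k : nat) (t1 t2 : R) : Rk h k v w t1 = Rk h k v w t2.
Proof.
  set (g := fun t j => (Dminus h (Dplus h (v t)) j * Lk h k (v t) j - v t j * Lk h k (v t) j * C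
                        + w t j * Lk h k (w t) j) * h).
  apply (zsum_conserved (fun t j => w t j * Lk h k (v t) j * h) g).
  - intros t j. destruct (Hsol t j) as [_ Hw'].
    rewrite second_difference_DmDp in Hw' by lra.
    replace (g t j)
      with (((Dminus h (Dplus h (v t)) j - C * v t j) * Lk h k (v t) j
             + w t j * Lk h k (w t) j) * h)
      by (unfold g; ring).
    apply is_derive_Rmult_const_r, is_derive_Rmult; [exact Hw' |].
    apply (is_derive_Lk h t v (w t)). intros i. apply Hsol.
  - intros t. destruct (wave_zsummable t) as [Hv Hw].
    apply zsummable_scal_r, zsummable_mul, zsummable_Lk; assumption.
  - intros a b. destruct (wave_dominated_on a b) as [Hv Hw].
    apply dominated_on_scal_r, dominated_on_plus; [apply dominated_on_minus |].
    + apply dominated_on_mul_Lk, Hv. apply dominated_on_Dminus, dominated_on_Dplus, Hv.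
    + apply dominated_on_scal_r, dominated_on_mul_Lk; exact Hv.
    + apply dominated_on_mul_Lk; assumption.
  - intros t. destruct (wave_zsummable t) as [Hv Hw]. unfold g.
    rewrite zsum_scal_r, zsum_plus, zsum_minus, zsum_scal_r
      by auto using zsummable_mul, zsummable_scal_r, zsummable_minus, zsummable_Lk,
                    zsummable_Dminus, zsummable_Dplus.
    fold (zdot (Dminus h (Dplus h (v t))) (Lk h k (v t))) (zdot (v t) (Lk h k (v t)))
      (zdot (w t) (Lk h k (w t))).
    rewrite zdot_DmDp_Lk_self, !zdot_Lk_self by assumption. ring.
Qed.

End DecayingSolution.

Section PairingWithSolution.

Variables (x0 : R) (alpha alpha_t : R -> R -> R).
Hypothesis Halpha : forall t x : R,
  is_derive (fun s => alpha s x) t (alpha_t t x) /\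
  is_derive (fun s => alpha_t s x) t
    ((alpha t (x + h) - 2 * alpha t x + alpha t (x - h)) / h ^ 2 - C * alpha t x).
Hypothesis Hdom : forall a b : R, exists M : Z -> R, zsummable M /\
  forall t : R, a <= t <= b -> forall j i : Z, (Z.abs i <= 1)%Z ->
    (Rabs (alpha t (x0 + IZR (j + i) * h)) + Rabs (alpha_t t (x0 + IZR (j + i) * h)))
    * (Rabs (v t j) + Rabs (w t j)) <= M j.

Definition alpha_v (i : Z) (t : R) (j : Z) : R := alpha t (x0 + IZR (j + i) * h) * v t j.

Lemma dominated_on_alpha_v (i : Z) (a b : R) :
  (Z.abs i <= 1)%Z -> dominated_on a b (alpha_v i).
Proof.
  intros Hi. destruct (Hdom a b) as [M [HM HbM]]. exists M. split; [exact HM |].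
  intros t Ht j. eapply Rle_trans; [| exact (HbM t Ht j i Hi)].
  unfold alpha_v. rewrite Rabs_mult.
  apply Rmult_le_compat; try apply Rabs_pos; pose proof (Rabs_pos (w t j));
    pose proof (Rabs_pos (alpha_t t (x0 + IZR (j + i) * h))); lra.
Qed.

(* [alpha (D_-D_+ v) - (D_-D_+ alpha) v] only leaves products of neighbouring values. *)
Lemma is_derive_Tfun_density (t : R) (j : Z) :
  is_derive (fun s => (alpha s (x0 + IZR j * h) * w s j - alpha_t s (x0 + IZR j * h) * v s j) * h) t
    ((alpha_v (-1) t (j + 1) + alpha_v 1 t (j - 1) - (alpha_v 1 t j + alpha_v (-1) t j)) / h).
Proof.
  destruct (Halpha t (x0 + IZR j * h)) as [Ha Hat]. destruct (Hsol t j) as [Hv Hw].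
  refine (is_derive_eq _ _ _ _
    (is_derive_Rmult_const_r _ t _ h (is_derive_minus _ _ t _ _
       (is_derive_Rmult _ _ t _ _ Ha Hw) (is_derive_Rmult _ _ t _ _ Hat Hv))) _).
  unfold alpha_v. replace (j + 1 + -1)%Z with j by lia. replace (j - 1 + 1)%Z with j by lia.
  replace (x0 + IZR j * h + h) with (x0 + IZR (j + 1) * h) by (rewrite plus_IZR; ring).
  replace (x0 + IZR j * h - h) with (x0 + IZR (j + -1) * h) by (rewrite plus_IZR; simpl; ring).
  replace (j + -1)%Z with (j - 1)%Z by lia.
  unfold minus, plus, opp; simpl. field. lra.
Qed.

Lemma Tfun_conserved (t1 t2 : R) :
  Tfun h x0 alpha alpha_t v w t1 = Tfun h x0 alpha alpha_t v w t2.
Proof.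
  assert (Hm : forall a b, dominated_on a b (alpha_v (-1)))
    by (intros; apply dominated_on_alpha_v; lia).
  assert (Hp : forall a b, dominated_on a b (alpha_v 1))
    by (intros; apply dominated_on_alpha_v; lia).
  unfold Tfun.
  apply (zsum_conserved
    (fun t j => (alpha t (x0 + IZR j * h) * w t j - alpha_t t (x0 + IZR j * h) * v t j) * h)
    (fun t j =>
       (alpha_v (-1) t (j + 1) + alpha_v 1 t (j - 1) - (alpha_v 1 t j + alpha_v (-1) t j)) / h)).
  - apply is_derive_Tfun_density.
  - intros t. destruct (Hdom t t) as [M [HM HbM]].
    apply zsummable_scal_r, (zsummable_le _ M HM). intros j.
    specialize (HbM t (conj (Rle_refl t) (Rle_refl t)) j 0%Z ltac:(simpl; lia)).
    rewrite Z.add_0_r in HbM. eapply Rle_trans; [| exact HbM].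
    unfold Rminus. eapply Rle_trans; [apply Rabs_triang |]. rewrite Rabs_Ropp, !Rabs_mult.
    pose proof (Rabs_pos (alpha t (x0 + IZR j * h))).
    pose proof (Rabs_pos (alpha_t t (x0 + IZR j * h))).
    pose proof (Rabs_pos (v t j)). pose proof (Rabs_pos (w t j)). nra.
  - intros a b. unfold Rdiv.
    apply dominated_on_scal_r, dominated_on_minus; apply dominated_on_plus;
      auto using dominated_on_succ, dominated_on_pred.
  - intros t.
    assert (Hmt : zsummable (alpha_v (-1) t)) by (apply (dominated_on_zsummable t t); auto; lra).
    assert (Hpt : zsummable (alpha_v 1 t)) by (apply (dominated_on_zsummable t t); auto; lra).
    unfold Rdiv. rewrite zsum_scal_r, zsum_minus, !zsum_plus, zsum_succ, zsum_pred
      by auto using zsummable_plus, zsummable_succ, zsummable_pred.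
    ring.
Qed.

End PairingWithSolution.

End WaveSystem.

Theorem mainTheorem5 (C h x0 : R) (hpos : 0 < h) (v w : R -> Z -> R)
  (Hsol : is_semidiscrete_wave_solution h C v w)
  (Hdec : locally_dominated v w) :
  (forall k : nat,
     (forall t : R,
        Rk h k v w t = - zsum (fun j => v t j * Lk h k (w t) j * h)) /\
     (forall t1 t2 : R, Rk h k v w t1 = Rk h k v w t2)) /\
  (forall alpha alpha_t : R -> R -> R,
     (forall t x : R,
        is_derive (fun s => alpha s x) t (alpha_t t x) /\
        is_derive (fun s => alpha_t s x) t
          ((alpha t (x + h) - 2 * alpha t x + alpha t (x - h)) / h ^ 2
           - C * alpha t x)) ->
     (* decay of the solution relative to the growth of alpha on the grid *)
     (forall a b : R, exists M : Z -> R, zsummable M /\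
        forall t : R, a <= t <= b -> forall j i : Z, (Z.abs i <= 1)%Z ->
          (Rabs (alpha t (x0 + IZR (j + i) * h))
           + Rabs (alpha_t t (x0 + IZR (j + i) * h)))
          * (Rabs (v t j) + Rabs (w t j)) <= M j) ->
     forall t1 t2 : R,
       Tfun h x0 alpha alpha_t v w t1 = Tfun h x0 alpha alpha_t v w t2).
Proof.
  split.
  - intros k. split.
    + apply Rk_skew, Hdec.
    + apply (Rk_conserved h C); assumption.
  - intros alpha alpha_t Halpha Hdom. apply (Tfun_conserved h C); assumption.
Qed.
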